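(* Let $W$ be a real $N\times N$ matrix, $M$ a real $n\times N$ matrix with Moore–Penrose pseudoinverse $M^+$ (an $N\times n$ matrix), and for each $i\in\{1,\ldots,N\}$ let $h_i:\mathbb{R}\times\mathbb{R}\to\mathbb{R}$ be analytic. Consider the complete dynamics $\dot x_i=h_i(x_i,y_i)$ with $y_i=\sum_{j=1}^NW_{ij}x_j$, and the least-square reduced dynamics \[\dot X_\mu=\sum_{i=1}^NM_{\mu i}\,h_i(\tilde x_i,\tilde y_i),\qquad \mu\in\{1,\ldots,n\},\] where $\tilde x=M^+X$ and $\tilde y=WM^+X$. Then the reduced dynamics can be expressed in terms of higher-order interactions between the observables as \[\dot X_\mu=\mathcal{C}_\mu+\sum_{d_x=1}^\infty\sum_{\bm\alpha}\mathcal{D}^{(d_x+1)}_{\mu\bm\alpha}X_{\bm\alpha}+\sum_{d_y=1}^\infty\sum_{\bm\beta}\mathcal{W}^{(d_y+1)}_{\mu\bm\beta}X_{\bm\beta}+\sum_{d_x,d_y=1}^\infty\sum_{\bm\alpha,\bm\beta}\mathcal{T}^{(d_x+d_y+1)}_{\mu\bm\alpha\bm\beta}X_{\bm\alpha}X_{\bm\beta},\] where the sums run over multi-indices $\bm\alpha=(\alpha_1,\ldots,\alpha_{d_x})\in\{1,\ldots,n\}^{d_x}$ and $\bm\beta=(\beta_1,\ldots,\beta_{d_y})\in\{1,\ldots,n\}^{d_y}$, $X_{\bm\gamma}=X_{\gamma_1}\cdots X_{\gamma_d}$, $\mathcal{C}_\mu$ is a real constant, and \begin{align*} \mathcal{D}^{(d_x+1)}_{\mu\bm\alpha}&=\sum_{i=1}^Nc_{id_x0}M_{\mu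 i}M^+_{i\alpha_1}\cdots M^+_{i\alpha_{d_x}},\\ \mathcal{W}^{(d_y+1)}_{\mu\bm\beta}&=\sum_{i,j_1,\ldots,j_{d_y}=1}^Nc_{i0d_y}M_{\mu i}W_{ij_1}\cdots W_{ij_{d_y}}M^+_{j_1\beta_1}\cdots M^+_{j_{d_y}\beta_{d_y}},\\ \mathcal{T}^{(d_x+d_y+1)}_{\mu\bm\alpha\bm\beta}&=\sum_{i,j_1,\ldots,j_{d_y}=1}^Nc_{id_xd_y}M_{\mu i}M^+_{i\alpha_1}\cdots M^+_{i\alpha_{d_x}}W_{ij_1}\cdots W_{ij_{d_y}}M^+_{j_1\beta_1}\cdots M^+_{j_{d_y}\beta_{d_y}}, \end{align*} for some real coefficients $c_{id_xd_y}$, $i\in\{1,\ldots,N\}$, $d_x,d_y\in\mathbb{Z}_{\ge0}$. *)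

From HB Require Import structures.
From mathcomp Require Import all_boot all_order all_algebra.
From mathcomp Require Import all_classical all_reals all_analysis.
Set Implicit Arguments. Unset Strict Implicit. Unset Printing Implicit Defensive.
Import Order.TTheory GRing.Theory Num.Theory.
Import numFieldNormedType.Exports.
Local Open Scope ring_scope.
Local Open Scope classical_set_scope.

Section Defs.
Variable R : realType.

Definition dps (c : nat -> nat -> R) (a b x y : R) (K : nat) : R :=
  \sum_(p < K) \sum_(q < K) c p q * (x - a) ^+ p * (y - b) ^+ q.

Definition analytic_at (h : R -> R -> R) (a b : R) : Prop :=
  exists (c : nat -> nat -> R) (r : R), 0 < r /\
    forall x y, `|x - a| < r -> `|y - b| < r ->
      cvgn (dps (fun p q => `|c p q|) 0 0 `|x - a| `|y - b|) /\
      dps c a b x y K @[K --> \oo] --> h x y.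

Definition is_MP_pinv m N (M : 'M[R]_(m, N)) (Mp : 'M[R]_(N, m)) : Prop :=
  [/\ M *m Mp *m M = M, Mp *m M *m Mp = Mp,
      (M *m Mp)^T = M *m Mp & (Mp *m M)^T = Mp *m M].

Definition reduced_field n N (W : 'M[R]_N) (M : 'M[R]_(n, N))
    (Mp : 'M[R]_(N, n)) (h : 'I_N -> R -> R -> R) (X : 'cV[R]_n)
    (mu : 'I_n) : R :=
  let xt := Mp *m X in
  let yt := W *m xt in
  \sum_(i < N) M mu i * h i (xt i ord0) (yt i ord0).

Definition Xmon n d (X : 'cV[R]_n) (g : {ffun 'I_d -> 'I_n}) : R :=
  \prod_(k < d) X (g k) ord0.

Definition Dten n N (M : 'M[R]_(n, N)) (Mp : 'M[R]_(N, n))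
    (c : 'I_N -> nat -> nat -> R) (dx : nat) (mu : 'I_n)
    (al : {ffun 'I_dx -> 'I_n}) : R :=
  \sum_(i < N) c i dx 0%N * M mu i * \prod_(k < dx) Mp i (al k).

Definition Wten n N (W : 'M[R]_N) (M : 'M[R]_(n, N)) (Mp : 'M[R]_(N, n))
    (c : 'I_N -> nat -> nat -> R) (dy : nat) (mu : 'I_n)
    (be : {ffun 'I_dy -> 'I_n}) : R :=
  \sum_(i < N) \sum_(j : {ffun 'I_dy -> 'I_N})
    c i 0%N dy * M mu i * \prod_(k < dy) W i (j k)
      * \prod_(k < dy) Mp (j k) (be k).

Definition Tten n N (W : 'M[R]_N) (M : 'M[R]_(n, N)) (Mp : 'M[R]_(N, n))
    (c : 'I_N -> nat -> nat -> R) (dx dy : nat) (mu : 'I_n)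
    (al : {ffun 'I_dx -> 'I_n}) (be : {ffun 'I_dy -> 'I_n}) : R :=
  \sum_(i < N) \sum_(j : {ffun 'I_dy -> 'I_N})
    c i dx dy * M mu i * \prod_(k < dx) Mp i (al k)
      * \prod_(k < dy) W i (j k) * \prod_(k < dy) Mp (j k) (be k).

Definition SD n N M Mp c mu (X : 'cV[R]_n) (K : nat) : R :=
  \sum_(1 <= dx < K.+1) \sum_(al : {ffun 'I_dx -> 'I_n})
     @Dten n N M Mp c dx mu al * Xmon X al.

Definition SW n N W M Mp c mu (X : 'cV[R]_n) (K : nat) : R :=
  \sum_(1 <= dy < K.+1) \sum_(be : {ffun 'I_dy -> 'I_n})
     @Wten n N W M Mp c dy mu be * Xmon X be.

Definition ST n N W M Mp c mu (X : 'cV[R]_n) (K : nat) : R :=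
  \sum_(1 <= dx < K.+1) \sum_(1 <= dy < K.+1)
    \sum_(al : {ffun 'I_dx -> 'I_n}) \sum_(be : {ffun 'I_dy -> 'I_n})
     @Tten n N W M Mp c dx dy mu al be * Xmon X al * Xmon X be.

End Defs.

From HB Require Import structures.
From mathcomp Require Import all_boot all_order all_algebra.
From mathcomp Require Import all_classical all_reals all_analysis.
From mathcomp Require Import ring lra.
Import Order.TTheory GRing.Theory Num.Theory.
Import numFieldNormedType.Exports.
Set Implicit Arguments. Unset Strict Implicit. Unset Printing Implicit Defensive.
Local Open Scope ring_scope.
Local Open Scope classical_set_scope.

(* Near the origin each h_i is the sum of an absolutely convergent double
   power series with coefficients c_i; absolute convergence splits it into
   its constant term, its pure x-part, its pure y-part and its mixed part,
   each convergent on its own.  For small X the points x~_i = (M^+ X)_i and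
   y~_i = (W M^+ X)_i lie in every polydisc of convergence, and the
   multinomial expansions
     x~_i^d = sum_alpha M^+_{i alpha_1} ... M^+_{i alpha_d} X_alpha
   (and its analogue for y~_i^d) turn the three parts, weighted by M_{mu i}
   and summed over i, into the series of the tensors D, W and T. *)

Section DoublePowerSeries.
Variable R : realType.
Implicit Types (c : nat -> nat -> R) (x y : R).

Lemma cvg_sum_mull N (a : 'I_N -> R) (u : 'I_N -> R ^nat) (l : 'I_N -> R) :
  (forall i, u i K @[K --> \oo] --> l i) ->
  \sum_(i < N) a i * u i K @[K --> \oo] --> \sum_(i < N) a i * l i.
Proof.
move=> u_cvg; apply: cvg_big => [|i _]; first exact: add_continuous.
exact: cvgMl_tmp.
Qed.

Lemma cvgn_series_from1 (a : R ^nat) (B : R) :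
  (forall K, \sum_(p < K) `|a p| <= B) ->
  cvgn (fun K => \sum_(1 <= p < K.+1) a p).
Proof.
move=> bounded; have normed_a : cvgn [normed series a].
  apply: nondecreasing_is_cvgn.
    by apply/nondecreasing_seqP => K; rewrite /= !seriesEord /= big_ord_recr /= lerDl.
  by exists B => _ [K _ <-]; rewrite /= seriesEord /= bounded.
move: (normed_cvg normed_a); rewrite -(is_cvg_series_restrict 1).
move=> /cvg_ex[l al]; apply/cvg_ex; exists l.
by move: al; rewrite -(cvg_shiftS (fun K => \sum_(1 <= p < K) a p)).
Qed.

Definition dps_xpart c x K := \sum_(1 <= p < K.+1) c p 0%N * x ^+ p.
Definition dps_ypart c y K := \sum_(1 <= q < K.+1) c 0%N q * y ^+ q.
Definition dps_mixed c x y K :=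
  \sum_(1 <= p < K.+1) \sum_(1 <= q < K.+1) c p q * x ^+ p * y ^+ q.

Lemma dps_norm_nondecreasing c x y :
  {homo dps (fun p q => `|c p q|) 0 0 `|x| `|y| : n m / (n <= m)%N >-> n <= m}.
Proof.
apply/nondecreasing_seqP => K; rewrite /dps big_ord_recr /= -[leLHS]addr0.
have term_ge0 p q : 0 <= `|c p q| * (`|x| - 0) ^+ p * (`|y| - 0) ^+ q.
  by rewrite subr0 !mulr_ge0 ?exprn_ge0.
apply: lerD; last by apply: sumr_ge0.
by apply: ler_sum => p _; rewrite big_ord_recr /= lerDl.
Qed.

Lemma dps0_split c x y K :
  dps c 0 0 x y K.+1 = c 0%N 0%N + dps_xpart c x K + dps_ypart c y K + dps_mixed c x y K.
Proof.
have split0 (F : nat -> R) : \sum_(i < K.+1) F i = F 0%N + \sum_(1 <= i < K.+1) F i.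
  by rewrite -(big_mkord xpredT) big_ltn.
rewrite /dps /dps_xpart /dps_ypart /dps_mixed !subr0.
rewrite (split0 (fun p => \sum_(q < K.+1) c p q * x ^+ p * y ^+ q)).
under eq_big_nat => p _ do rewrite (split0 (fun q => c p q * x ^+ p * y ^+ q)).
rewrite (split0 (fun q => c 0%N q * x ^+ 0 * y ^+ q)).
rewrite big_split /= !expr0 !mulr1.
under eq_big_nat do rewrite mulr1.
under [X in _ + (X + _)]eq_big_nat do rewrite mulr1.
ring.
Qed.

Definition dps0_split_expansion c x y (v : R) : Prop :=
  [/\ cvgn (dps_xpart c x), cvgn (dps_ypart c y), cvgn (dps_mixed c x y) &
      v = c 0%N 0%N + limn (dps_xpart c x) + limn (dps_ypart c y)
            + limn (dps_mixed c x y)].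

Lemma dps0_decomposition c x y l :
  cvgn (dps (fun p q => `|c p q|) 0 0 `|x| `|y|) ->
  dps c 0 0 x y K @[K --> \oo] --> l ->
  dps0_split_expansion c x y l.
Proof.
move=> norm_cvg dps_cvg; set A := dps _ 0 0 _ _ in norm_cvg.
have A_le K : A K <= limn A.
  exact: nondecreasing_cvgn_le (dps_norm_nondecreasing c x y) norm_cvg K.
have A0 : A 0%N = 0 by rewrite /A /dps big_ord0.
have term_ge0 p q : 0 <= `|c p q| * (`|x| - 0) ^+ p * (`|y| - 0) ^+ q.
  by rewrite subr0 !mulr_ge0 ?exprn_ge0.
have x_cvg : cvgn (dps_xpart c x).
  apply: (@cvgn_series_from1 _ (limn A)) => -[|K]; first by rewrite big_ord0 -A0 A_le.
  apply: le_trans (A_le K.+1); apply: ler_sum => p _.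
  rewrite big_ord_recl /= !subr0 expr0 mulr1 normrM normrX lerDl.
  by apply: sumr_ge0 => q _; have := term_ge0 p (bump 0 q); rewrite subr0.
have y_cvg : cvgn (dps_ypart c y).
  apply: (@cvgn_series_from1 _ (limn A)) => -[|K]; first by rewrite big_ord0 -A0 A_le.
  apply: le_trans (A_le K.+1); rewrite /A /dps [leRHS]big_ord_recl /= -[leLHS]addr0.
  apply: lerD; last by apply: sumr_ge0 => p _; apply: sumr_ge0.
  by apply: ler_sum => q _; rewrite !subr0 expr0 mulr1 normrM normrX.
have mixed_cvg : dps_mixed c x y K @[K --> \oo] -->
    l - c 0%N 0%N - limn (dps_xpart c x) - limn (dps_ypart c y).
  have -> : dps_mixed c x y = fun K => dps c 0 0 x y K.+1 - c 0%N 0%N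
      - dps_xpart c x K - dps_ypart c y K.
    by apply: funext => K; rewrite dps0_split; ring.
  apply: cvgB => //; apply: cvgB => //; apply: cvgB; last exact: cvg_cst.
  by rewrite cvg_shiftS.
split => //; first exact: cvgP mixed_cvg.
by rewrite (cvg_lim _ mixed_cvg) //; ring.
Qed.

Lemma analytic_at0_expansion (h : R -> R -> R) :
  analytic_at h 0 0 -> exists c (r : R), 0 < r /\
    forall x y, `|x| < r -> `|y| < r -> dps0_split_expansion c x y (h x y).
Proof.
case=> c [r [r_gt0 dps_h]]; exists c, r; split => // x y xr yr.
by have [] := dps_h x y; rewrite ?subr0 //; apply: dps0_decomposition.
Qed.
End DoublePowerSeries.

Section TensorContraction.
Variables (R : realType) (n N : nat).
Variables (W : 'M[R]_N) (M : 'M[R]_(n, N)) (Mp : 'M[R]_(N, n)) (X : 'cV[R]_n).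
Let xt i := (Mp *m X) i ord0.
Let yt i := (W *m (Mp *m X)) i ord0.

Lemma sum_prod_Xmon d (a : 'I_d -> 'I_n -> R) :
  \sum_(al : {ffun 'I_d -> 'I_n}) (\prod_(k < d) a k (al k)) * Xmon X al
  = \prod_(k < d) \sum_(b < n) a k b * X b ord0.
Proof.
rewrite bigA_distr_bigA; apply: eq_bigr => al _.
by rewrite /Xmon -big_split.
Qed.

Lemma sum_Xmon_pinv_pow i d :
  \sum_(al : {ffun 'I_d -> 'I_n}) (\prod_(k < d) Mp i (al k)) * Xmon X al = xt i ^+ d.
Proof. by rewrite (sum_prod_Xmon (fun=> Mp i)) prodr_const card_ord /xt mxE. Qed.

Lemma sum_Xmon_W_pinv_pow i d :
  \sum_(be : {ffun 'I_d -> 'I_n}) \sum_(j : {ffun 'I_d -> 'I_N})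
    (\prod_(k < d) W i (j k)) * (\prod_(k < d) Mp (j k) (be k)) * Xmon X be
  = yt i ^+ d.
Proof.
rewrite exchange_big /=.
under eq_bigr => j _.
  under eq_bigr do rewrite -mulrA.
  rewrite -mulr_sumr (sum_prod_Xmon (fun k => Mp (j k))) -big_split /=.
  over.
rewrite /= -(bigA_distr_bigA (fun=> fun a => W i a * \sum_(b < n) Mp a b * X b ord0)).
rewrite prodr_const card_ord /yt mxE.
by under [in RHS]eq_bigr do rewrite mxE.
Qed.

Variables (c : 'I_N -> nat -> nat -> R) (mu : 'I_n).

Lemma sum_Dten_Xmon dx :
  \sum_(al : {ffun 'I_dx -> 'I_n}) Dten M Mp c mu al * Xmon X al
  = \sum_(i < N) c i dx 0%N * M mu i * xt i ^+ dx.
Proof.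
rewrite /Dten; under eq_bigr do rewrite mulr_suml.
rewrite exchange_big; apply: eq_bigr => i _.
by rewrite -sum_Xmon_pinv_pow mulr_sumr; apply: eq_bigr => al _; ring.
Qed.

Lemma sum_Wten_Xmon dy :
  \sum_(be : {ffun 'I_dy -> 'I_n}) Wten W M Mp c mu be * Xmon X be
  = \sum_(i < N) c i 0%N dy * M mu i * yt i ^+ dy.
Proof.
rewrite /Wten; under eq_bigr do rewrite mulr_suml.
rewrite exchange_big; apply: eq_bigr => i _.
rewrite -sum_Xmon_W_pinv_pow mulr_sumr; apply: eq_bigr => be _.
by rewrite mulr_suml mulr_sumr; apply: eq_bigr => j _; ring.
Qed.

Lemma sum_Tten_Xmon dx dy :
  \sum_(al : {ffun 'I_dx -> 'I_n}) \sum_(be : {ffun 'I_dy -> 'I_n})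
    Tten W M Mp c mu al be * Xmon X al * Xmon X be
  = \sum_(i < N) c i dx dy * M mu i * (xt i ^+ dx * yt i ^+ dy).
Proof.
rewrite /Tten; under eq_bigr do under eq_bigr do rewrite !mulr_suml.
under eq_bigr do rewrite exchange_big.
rewrite exchange_big; apply: eq_bigr => i _.
rewrite -sum_Xmon_pinv_pow -sum_Xmon_W_pinv_pow mulr_suml mulr_sumr.
apply: eq_bigr => al _; rewrite !mulr_sumr; apply: eq_bigr => be _.
by rewrite !mulr_suml !mulr_sumr; apply: eq_bigr => j _; ring.
Qed.

Lemma SD_dps_xpart K :
  SD M Mp c mu X K = \sum_(i < N) M mu i * dps_xpart (c i) (xt i) K.
Proof.
rewrite /SD /dps_xpart; under eq_big_nat => dx _ do rewrite sum_Dten_Xmon.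
rewrite exchange_big; apply: eq_bigr => i _.
by rewrite mulr_sumr; apply: eq_big_nat => dx _; ring.
Qed.

Lemma SW_dps_ypart K :
  SW W M Mp c mu X K = \sum_(i < N) M mu i * dps_ypart (c i) (yt i) K.
Proof.
rewrite /SW /dps_ypart; under eq_big_nat => dy _ do rewrite sum_Wten_Xmon.
rewrite exchange_big; apply: eq_bigr => i _.
by rewrite mulr_sumr; apply: eq_big_nat => dy _; ring.
Qed.

Lemma ST_dps_mixed K :
  ST W M Mp c mu X K = \sum_(i < N) M mu i * dps_mixed (c i) (xt i) (yt i) K.
Proof.
rewrite /ST /dps_mixed.
under eq_big_nat => dx _ do under eq_big_nat => dy _ do rewrite sum_Tten_Xmon.
under eq_big_nat => dx _ do rewrite exchange_big.
rewrite exchange_big; apply: eq_bigr => i _.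
rewrite mulr_sumr; apply: eq_big_nat => dx _.
by rewrite mulr_sumr; apply: eq_big_nat => dy _; ring.
Qed.
End TensorContraction.

Section SmallImage.
Variable R : realType.

Lemma norm_mulmx_col_le m k (A : 'M[R]_(m, k)) (v : 'cV[R]_k) (s : R) :
  0 <= s -> (forall j, `|v j ord0| <= s) ->
  forall i, `|(A *m v) i ord0| <= (\sum_i \sum_j `|A i j|) * s.
Proof.
move=> s_ge0 v_le i; rewrite mxE; apply: le_trans (ler_norm_sum _ _ _) _.
apply: (@le_trans _ _ (\sum_j `|A i j| * s)).
  by apply: ler_sum => j _; rewrite normrM ler_wpM2l.
rewrite -mulr_suml ler_wpM2r // (bigD1 i) //= lerDl.
by apply: sumr_ge0 => i' _; apply: sumr_ge0.
Qed.

Lemma exists_radius_small_image n N (W : 'M[R]_N) (Mp : 'M[R]_(N, n)) (rho : R) :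
  0 < rho -> exists2 r, 0 < r & forall X : 'cV[R]_n,
    (forall nu, `|X nu ord0| < r) ->
    forall i, `|(Mp *m X) i ord0| < rho /\ `|(W *m (Mp *m X)) i ord0| < rho.
Proof.
move=> rho_gt0.
pose a : R := \sum_i \sum_j `|Mp i j|; pose b : R := \sum_i \sum_j `|W i j|.
have a_ge0 : 0 <= a by apply: sumr_ge0 => i _; apply: sumr_ge0.
have b_ge0 : 0 <= b by apply: sumr_ge0 => i _; apply: sumr_ge0.
have den_gt0 : 0 < (1 + a) * (1 + b) by apply: mulr_gt0; lra.
set r := rho / ((1 + a) * (1 + b)).
have r_gt0 : 0 < r by apply: divr_gt0.
have rE : r * ((1 + a) * (1 + b)) = rho by rewrite divfK ?lt0r_neq0.
exists r => // X X_lt i.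
have xt_le : forall i, `|(Mp *m X) i ord0| <= a * r.
  exact: norm_mulmx_col_le (ltW r_gt0) (fun j => ltW (X_lt j)).
have ar_ge0 : 0 <= a * r by rewrite mulr_ge0 // ltW.
have bar_ge0 : 0 <= b * (a * r) by rewrite mulr_ge0.
split; first by apply: le_lt_trans (xt_le i) _; nra.
have yt_le : `|(W *m (Mp *m X)) i ord0| <= b * (a * r).
  exact: norm_mulmx_col_le.
by apply: le_lt_trans yt_le _; nra.
Qed.
End SmallImage.

Theorem propositionS48 (R : realType) (n N : nat)
    (W : 'M[R]_N) (M : 'M[R]_(n, N)) (Mp : 'M[R]_(N, n))
    (h : 'I_N -> R -> R -> R) :
  is_MP_pinv M Mp ->
  (forall i a b, analytic_at (h i) a b) ->
  exists (c : 'I_N -> nat -> nat -> R) (C : 'I_n -> R) (r : R), 0 < r /\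
    forall X : 'cV[R]_n, (forall nu, `|X nu ord0| < r) ->
    forall mu : 'I_n,
    exists lD lW lT : R,
      [/\ SD M Mp c mu X K @[K --> \oo] --> lD,
          SW W M Mp c mu X K @[K --> \oo] --> lW,
          ST W M Mp c mu X K @[K --> \oo] --> lT &
          reduced_field W M Mp h X mu = C mu + lD + lW + lT].
Proof.
move=> _ h_analytic.
have /choice[cr cr_spec] i : exists cr : (nat -> nat -> R) * R, 0 < cr.2 /\
    forall x y, `|x| < cr.2 -> `|y| < cr.2 -> dps0_split_expansion cr.1 x y (h i x y).
  by have [c [r ?]] := analytic_at0_expansion (h_analytic i 0 0); exists (c, r).
pose c i := (cr i).1.
pose rho : R := \big[Num.min/1]_i (cr i).2.
have rho_gt0 : 0 < rho by apply: lt_bigmin => // i _; case: (cr_spec i).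
have rho_le i : rho <= (cr i).2 by apply: bigmin_le.
have [r r_gt0 small_image] := exists_radius_small_image W Mp rho_gt0.
exists c, (fun mu => \sum_(i < N) M mu i * c i 0%N 0%N), r; split => // X X_lt mu.
pose xt i := (Mp *m X) i ord0; pose yt i := (W *m (Mp *m X)) i ord0.
have expansion i : dps0_split_expansion (c i) (xt i) (yt i) (h i (xt i) (yt i)).
  have [xt_lt yt_lt] := small_image X X_lt i.
  by apply: (cr_spec i).2; [exact: lt_le_trans xt_lt (rho_le i)
                          | exact: lt_le_trans yt_lt (rho_le i)].
exists (\sum_(i < N) M mu i * limn (dps_xpart (c i) (xt i))),
  (\sum_(i < N) M mu i * limn (dps_ypart (c i) (yt i))),
  (\sum_(i < N) M mu i * limn (dps_mixed (c i) (xt i) (yt i))); split.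
- under eq_cvg do rewrite SD_dps_xpart.
  by apply: cvg_sum_mull => i; case: (expansion i).
- under eq_cvg do rewrite SW_dps_ypart.
  by apply: cvg_sum_mull => i; case: (expansion i).
- under eq_cvg do rewrite ST_dps_mixed.
  by apply: cvg_sum_mull => i; case: (expansion i).
rewrite /reduced_field -!big_split /=; apply: eq_bigr => i _.
by have [_ _ _ ->] := expansion i; ring.
Qed.
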